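(* Let $k\ge 1$, $0\le r<k$ and $n\ge 1$ be integers, and let $$C_n(k,r,x)=\left(\binom{ki+r}{i-j}x^k+\binom{k(i+1)+r}{i-j+1}\right)_{i,j=0}^{n-1}.$$ Then $x^r\det C_n(k,r,x)=L^{(k)}_{kn+r}(x)$.
   Context: Binomial coefficients: for integers $m\ge 0$ and $j$, $\binom{m}{j}$ is the usual binomial coefficient, with $\binom{m}{j}=0$ if $j<0$ or $j>m$. For an integer $k\ge1$, the generalized Lucas polynomials $L^{(k)}_n(x)\in\mathbb{Z}[x]$ ($n\ge0$) are defined by $L^{(k)}_0(x)=k$, $L^{(k)}_n(x)=x^n$ for $0<n<k$, and $L^{(k)}_n(x)=xL^{(k)}_{n-1}(x)+L^{(k)}_{n-k}(x)$ for $n\ge k$; equivalently, for $n\ge1$, $L^{(k)}_n(x)=\sum_{j=0}^{\lfloor n/k\rfloor}\frac{n}{n-(k-1)j}\binom{n-(k-1)j}{j}x^{n-kj}$. *)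

From HB Require Import structures.
From mathcomp Require Import all_boot all_order all_algebra.
Set Implicit Arguments. Unset Strict Implicit. Unset Printing Implicit Defensive.
Import Order.TTheory GRing.Theory Num.Theory.
Local Open Scope ring_scope.

Definition binz (m : nat) (j : int) : int :=
  match j with
  | Posz t => ('C(m, t))%:Z
  | Negz _ => 0
  end.

(* lucas_aux k n = [:: L_n; L_(n-1); ...; L_0] for the generalized Lucas
   polynomials L^(k) defined by L_0 = k, L_n = x^n (0<n<k),
   L_n = x L_(n-1) + L_(n-k) (n >= k). *)
Fixpoint lucas_aux (k n : nat) : seq {poly int} :=
  match n with
  | 0 => [:: (k%:Z)%:P]
  | n'.+1 =>
      let s := lucas_aux k n' in
      (if (n'.+1 < k)%N then 'X^(n'.+1) else 'X * head 0 s + nth 0 s k.-1) :: s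
  end.

Definition lucasL (k n : nat) : {poly int} := head 0 (lucas_aux k n).

Definition Cmat (k r n : nat) : 'M[{poly int}]_n :=
  \matrix_(i < n, j < n)
    ((binz (k * i + r) (i%:Z - j%:Z))%:P * 'X^k
     + (binz (k * i.+1 + r) (i%:Z - j%:Z + 1))%:P).

From HB Require Import structures.
From mathcomp Require Import all_boot all_order all_algebra.
From mathcomp Require Import ring zify.
Set Implicit Arguments.
Unset Strict Implicit.
Unset Printing Implicit Defensive.
Import GRing.Theory.
Local Open Scope ring_scope.

(* With L_0 read as 1, the Lucas polynomials invert to
   x^N = sum_i (-1)^i C(N, i) L_(N - k i); this follows by induction on N,
   since pushing Pascal's rule and the Lucas recurrence through the sum leaves
   a telescoping remainder.  Taking N = k i + r, the identity says that the
   vector ((-1)^j L_(k j + r))_(j <= n) is annihilated by C_n bordered by one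
   more column, and that column vanishes except for a 1 in the last row.
   Cramer's rule then gives det C_n * L_r = +- L_(k n + r), where L_r = x^r
   and the cofactor involved is a unitriangular minor. *)

Lemma det_mul_kernel_entry {R : comPzRingType} {n} (i : 'I_n) {j : 'I_n}
    {A : 'M[R]_n} {w : 'cV[R]_n} {c : R} :
  A *m w = c *: delta_mx j 0 -> \det A * w i 0 = c * cofactor A j i.
Proof.
move=> Aw; have /matrixP/(_ i 0) := congr1 (mulmx (\adj A)) Aw.
rewrite mulmxA mul_adj_mx mul_scalar_mx -scalemxAr !mxE => ->; congr (_ * _).
rewrite (bigD1 j) //= big1 => [|l /negbTE ljF]; last by rewrite !mxE ljF mulr0.
by rewrite !mxE !eqxx mulr1 addr0.
Qed.

Lemma sign_sub (R : pzRingType) i j :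
  (j <= i)%N -> (-1) ^+ j = (-1) ^+ i * (-1) ^+ (i - j) :> R.
Proof.
move=> ji; rewrite -{1}(subnK ji) exprD -mulrA -exprD addnC exprD mulrA.
by rewrite -expr2 sqrr_sign mul1r.
Qed.

Lemma bin_succ_mul N i k :
  (k * i.+1 = N.+1)%N -> 'C(N, i.+1) = ((k - 1) * 'C(N, i))%N.
Proof.
move=> kiN; apply/eqP; rewrite -(eqn_pmul2l (ltn0Sn i)) mul_bin_left mulnA.
by rewrite (mulnC i.+1) [((k - 1) * _)%N]mulnBl mul1n kiN subSS.
Qed.

Lemma binz_lt0 a z : (z < 0)%R -> binz a z = 0.
Proof. by case: z. Qed.

Lemma binz_subn a i j : (j <= i)%N -> binz a (i%:Z - j%:Z) = 'C(a, i - j).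
Proof. by move=> ji; rewrite subzn. Qed.

Lemma binz_subn1 a i j :
  (j <= i.+1)%N -> binz a (i%:Z - j%:Z + 1) = 'C(a, i.+1 - j).
Proof.
move=> ji; rewrite -binz_subn //; congr binz; lia.
Qed.

Section GeneralizedLucas.
Variable k : nat.
Hypothesis k_gt0 : (0 < k)%N.

Lemma nth_lucas_aux n i : (i <= n)%N -> nth 0 (lucas_aux k n) i = lucasL k (n - i).
Proof. by elim: n i => [|n IHn] [|i] //= ?; rewrite IHn. Qed.

Lemma lucasL_small n : (0 < n < k)%N -> lucasL k n = 'X^n.
Proof. by case: n => [|n] //= nk; rewrite /lucasL /= nk. Qed.

Lemma lucasL_rec n :
  (k <= n.+1)%N -> lucasL k n.+1 = 'X * lucasL k n + lucasL k (n.+1 - k).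
Proof.
move=> kn; rewrite /lucasL /= ltnNge kn /= nth_lucas_aux; last by lia.
by congr (_ + lucasL k _); lia.
Qed.

(* L^(k) with the value at 0 replaced by 1: the inversion formula below needs
   x^0 = 1 there, not k. *)
Definition lucasL1 n : {poly int} := if n is 0 then 1 else lucasL k n.

Lemma lucasL1_pos n : (0 < n)%N -> lucasL1 n = lucasL k n.
Proof. by case: n. Qed.

Lemma lucasL1_small n : (n < k)%N -> lucasL1 n = 'X^n.
Proof. by case: n => [|n] nk; rewrite /lucasL1 ?expr0 // lucasL_small. Qed.

Lemma lucasL1_k : lucasL1 k = 'X^k + k%:R.
Proof.
have kE : k = k.-1.+1 by rewrite prednK.
have lucasL0 : lucasL k 0 = k%:R by rewrite /lucasL /= -natz polyC_natr.
rewrite lucasL1_pos // {2}kE lucasL_rec -kE ?subnn // lucasL0; congr (_ + _).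
have [k1|k1_gt0] := posnP k.-1.
  have k_1 : k = 1%N by lia.
  by rewrite k1 lucasL0 k_1 mulr1 expr1.
by rewrite lucasL_small -?exprS -?kE //; lia.
Qed.

Lemma lucasL1_rec n : (k < n)%N -> lucasL1 n = 'X * lucasL1 n.-1 + lucasL1 (n - k).
Proof.
case: n => [|n] // kn; rewrite !lucasL1_pos ?subn_gt0 //= ?lucasL_rec //; lia.
Qed.

Definition inversion_term N i : {poly int} :=
  if (k * i <= N)%N then (-1) ^+ i * 'C(N, i)%:R * lucasL1 (N - k * i) else 0.

(* Correction terms making inversion_term telescope when the recurrence of
   lucasL1 and Pascal's rule are pushed through it; the first summand
   accounts for the exceptional value lucasL1 k = x^k + k. *)
Definition boundary_term N i : {poly int} :=
  (if (k * i == N.+1)%N then (-1) ^+ i * 'C(N, i)%:R else 0)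
  + (if (k * i <= N.+1)%N then
       (-1) ^+ i * ('C(N.+1, i)%:R - 'C(N, i)%:R) * lucasL1 (N.+1 - k * i)
     else 0).

Ltac decide_ifs := repeat match goal with |- context [if ?b then _ else _] =>
  (have -> : b = true by nia) || (have -> : b = false by (apply/negbTE; nia)) end.

Lemma inversion_term_succ N i :
  inversion_term N.+1 i
  = 'X * inversion_term N i - (boundary_term N i.+1 - boundary_term N i).
Proof.
rewrite /inversion_term /boundary_term mulnS binS natrD !exprS.
set m := (k * i)%N.
have [Nm|mN] := ltnP N.+1 m; first by decide_ifs; rewrite !(mulr0, addr0, subr0).
have [mN1|mN1] := eqVneq m N.+1.
  by decide_ifs; rewrite mN1 subnn /lucasL1; ring.
have [Nkm|kmN] := ltnP N.+1 (k + m).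
  decide_ifs; rewrite !lucasL1_small; try lia.
  have -> : (N.+1 - m = (N - m).+1)%N by lia.
  by rewrite exprS; ring.
have [kmN1|kmN1] := eqVneq (k + m) N.+1.
  decide_ifs.
  have -> : (N.+1 - m = k)%N by lia.
  have -> : (N.+1 - (k + m) = 0)%N by lia.
  rewrite lucasL1_k lucasL1_small; last by lia.
  rewrite (@bin_succ_mul N i k); last by rewrite mulnS; lia.
  rewrite natrM natrB // (_ : 'X^k = 'X * 'X^(N - m)); last first.
    by rewrite -exprS; congr (_ ^+ _); lia.
  by rewrite /lucasL1; ring.
decide_ifs.
rewrite (@lucasL1_rec (N.+1 - m)%N); last by lia.
have -> : ((N.+1 - m).-1 = N - m)%N by lia.
have -> : ((N.+1 - m) - k = N.+1 - (k + m))%N by lia.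
ring.
Qed.

Lemma boundary_term0 N : boundary_term N 0 = 0.
Proof. by rewrite /boundary_term muln0 /= !bin0 subrr mulr0 mul0r add0r. Qed.

Lemma boundary_term_large N : boundary_term N N.+2 = 0.
Proof. by rewrite /boundary_term; decide_ifs; rewrite addr0. Qed.

Lemma lucas_inversion N : \sum_(0 <= i < N.+1) inversion_term N i = 'X^N.
Proof.
elim: N => [|N IHN]; first by rewrite big_nat1 /inversion_term muln0 /= expr0 mul1r mulr1.
under eq_bigr do rewrite inversion_term_succ.
rewrite sumrB telescope_sumr // boundary_term_large boundary_term0 subrr subr0.
rewrite -mulr_sumr big_nat_recr //= IHN /inversion_term ifF ?addr0 -?exprS //.
by apply/negbTE; nia.
Qed.

End GeneralizedLucas.

Section LucasMatrix.
Variables k r : nat.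

Definition lucas_shift j := lucasL1 k (k * j + r).

Definition lucas_kernel n : 'cV[{poly int}]_n :=
  \col_(j < n) ((-1) ^+ j * lucas_shift j).

Definition cmat_entry (i j : nat) : {poly int} :=
  (binz (k * i + r) (i%:Z - j%:Z))%:P * 'X^k
  + (binz (k * i.+1 + r) (i%:Z - j%:Z + 1))%:P.

Lemma cmat_entry_gt i j : (i.+1 < j)%N -> cmat_entry i j = 0.
Proof. by move=> ij; rewrite /cmat_entry !binz_lt0 ?mul0r ?addr0 //; lia. Qed.

Lemma cmat_entry_superdiag i : cmat_entry i i.+1 = 1.
Proof.
by rewrite /cmat_entry binz_lt0 ?binz_subn1 ?subnn ?bin0 ?mul0r ?add0r //; lia.
Qed.

Lemma CmatE n (i j : 'I_n) : Cmat k r n i j = cmat_entry i j.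
Proof. by rewrite mxE. Qed.

Lemma det_Cmat_minor n : \det (row' ord_max (col' ord0 (Cmat k r n.+1))) = 1.
Proof.
rewrite det_trig; last first.
  by apply/is_trig_mxP => i j ij; rewrite 2!mxE CmatE lift_max lift0 cmat_entry_gt.
by rewrite big1 // => i _; rewrite 2!mxE CmatE lift_max lift0 cmat_entry_superdiag.
Qed.

Hypothesis k_gt0 : (0 < k)%N.
Hypothesis r_lt_k : (r < k)%N.

Lemma lucas_inversion_shift m :
  \sum_(0 <= j < m.+1) (-1) ^+ (m - j) * 'C(k * m + r, m - j)%:R * lucas_shift j
  = 'X^(k * m + r).
Proof.
rewrite -(lucas_inversion k_gt0) [RHS](@big_cat_nat _ _ _ m.+1) //=; last by nia.
rewrite [X in _ = _ + X]big_nat_cond [X in _ = _ + X]big1 ?addr0; last first.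
  by move=> i /andP[/andP[mi _] _]; rewrite /inversion_term ifF //; apply/negbTE; nia.
rewrite [RHS]big_nat_rev /=; apply: eq_big_nat => j /andP[_ jm].
rewrite add0n subSS /inversion_term ifT; last by nia.
by rewrite /lucas_shift; congr (_ * lucasL1 k _); rewrite mulnBr; nia.
Qed.

Lemma cmat_entry_kernel i :
  \sum_(0 <= j < i.+2) cmat_entry i j * ((-1) ^+ j * lucas_shift j) = 0.
Proof.
have polyC_bin a b : ('C(a, b)%:Z)%:P = 'C(a, b)%:R :> {poly int}.
  by rewrite -natz polyC_natr.
rewrite /cmat_entry; under eq_bigr do rewrite mulrDl; rewrite big_split /=.
rewrite big_nat_recr //= binz_lt0 ?polyC0 ?mul0r ?addr0; last by lia.
have -> : \sum_(0 <= j < i.+1)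
    (binz (k * i + r) (i%:Z - j%:Z))%:P * 'X^k * ((-1) ^+ j * lucas_shift j)
    = (-1) ^+ i * 'X^k * 'X^(k * i + r).
  rewrite -lucas_inversion_shift mulr_sumr; apply: eq_big_nat => j /andP[_ ji].
  by rewrite binz_subn // polyC_bin (@sign_sub _ i j ji); ring.
have -> : \sum_(0 <= j < i.+2)
    (binz (k * i.+1 + r) (i%:Z - j%:Z + 1))%:P * ((-1) ^+ j * lucas_shift j)
    = (-1) ^+ i.+1 * 'X^(k * i.+1 + r).
  rewrite -lucas_inversion_shift mulr_sumr; apply: eq_big_nat => j /andP[_ ji].
  by rewrite binz_subn1 // polyC_bin (@sign_sub _ i.+1 j ji); ring.
rewrite exprS -mulrA -exprD (_ : (k + (k * i + r) = k * i.+1 + r)%N); first ring.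
by rewrite mulnS addnA.
Qed.

Lemma Cmat_mul_kernel n :
  Cmat k r n.+1 *m lucas_kernel n.+1
  = (- ((-1) ^+ n.+1 * lucas_shift n.+1)) *: delta_mx ord_max 0.
Proof.
apply/matrixP => i j; rewrite ord1 !mxE eqxx andbT.
under eq_bigr do rewrite CmatE mxE.
rewrite -(big_mkord xpredT (fun l => cmat_entry i l * ((-1) ^+ l * lucas_shift l))).
have in_row_i : (i < n.+1)%N := ltn_ord i.
have row_sum : \sum_(0 <= l < n.+2) cmat_entry i l * ((-1) ^+ l * lucas_shift l) = 0.
  rewrite (@big_cat_nat _ _ _ i.+2) //= cmat_entry_kernel add0r big_nat_cond big1 //.
  by move=> l /andP[/andP[il _] _]; rewrite cmat_entry_gt ?mul0r.
move: row_sum; rewrite big_nat_recr //= => /(canRL (addrK _)); rewrite add0r => ->.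
have [->|i_ne] := eqVneq i ord_max; first by rewrite cmat_entry_superdiag mul1r mulr1.
have i_lt : (i.+1 < n.+1)%N by rewrite ltnS ltn_neqAle i_ne -ltnS ltn_ord.
by rewrite cmat_entry_gt ?mul0r ?mulr0 ?oppr0.
Qed.
End LucasMatrix.

Theorem theorem3 (k r n : nat) (hk : (1 <= k)%N) (hr : (r < k)%N) (hn : (1 <= n)%N) :
  'X^r * \det (Cmat k r n) = lucasL k (k * n + r).
Proof.
case: n hn => [|n] // _.
have := det_mul_kernel_entry ord0 (Cmat_mul_kernel hk hr n).
rewrite /cofactor det_Cmat_minor mulr1 /lucas_kernel mxE /lucas_shift muln0 add0n.
rewrite expr0 mul1r lucasL1_small // [_ * 'X^r]mulrC => ->.
rewrite lucasL1_pos ?addn0; last by nia.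
by rewrite exprS mulN1r mulNr opprK mulrC mulrA -expr2 sqrr_sign mul1r.
Qed.
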